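(* Let $\mathcal X$ be a set, let $\kappa:\mathcal X\to\mathbb N\cup\{\infty\}$ and $A_\theta:\mathcal X\to[0,1]$ be maps, and let $\oplus:\mathcal X\times\mathcal X\to\mathcal X$ be a binary operation. For $x_1,\dots,x_m\in\mathcal X$ with $m\ge 3$, write $x_1\oplus\cdots\oplus x_m$ for the right-associated composition $x_1\oplus(x_2\oplus(\cdots\oplus x_m))$. Suppose we are given a notion of independence for pairs $x,y\in\mathcal X$ and of joint independence for finite families in $\mathcal X$. Define \[ \mathcal X_{\mathrm{fin}}:=\{x\in\mathcal X:\kappa(x)<\infty\},\qquad K:=\kappa(\mathcal X_{\mathrm{fin}})\subseteq\mathbb N. \] Assume the following, on $\mathcal X_{\mathrm{fin}}$: (A1) (Accuracy–complexity monotonicity) For all $x,y\in\mathcal X_{\mathrm{fin}}$, if $\kappa(x)\le\kappa(y)$ then $A_\theta(x)\ge A_\theta(y)$. (A2) (Compositionality) For all independent $x,y\in\mathcal X_{\mathrm{fin}}$, \[ \kappa(x\oplus y)=\kappa(x)+\kappa(y),\qquad A_\theta(x\oplus y)=A_\theta(x)\cdot A_\theta(y). \] (A3) For every $u\in K$ and every $m\in\mathbb N$ ($m\ge1$), there exist $x_1,\dots,x_m\in\mathcal X_{\mathrm{fin}}$ with $\kappa(x_i)=u$ for all $i$ and $\{x_1,\dots,x_m\}$ jointly independent; consequently $x_1\oplus\cdots\oplus x_m$ is valid and \[ \kappa(x_1\oplus\cdots\oplus x_m)=mu\in K,\qquad A_\theta(x_1\oplus\cdots\oplus x_m)=\prod_{i=1}^m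 A_\theta(x_i). \] Then there exists $\lambda_\theta\ge 0$ such that for all $x\in\mathcal X_{\mathrm{fin}}$ with $0<A_\theta(x)\le 1$, \[ A_\theta(x)=\exp\!\big(-\lambda_\theta\,\kappa(x)\big). \]
   Context: Interpretation (not needed for the statement): $\mathcal X$ is a space of questions, $\kappa(x)$ is the complexity of question $x$ (minimal number of primitive solution steps), $A_\theta(x)\in[0,1]$ is the probability that model $\theta$ answers $x$ correctly, and $x\oplus y$ is the composite question formed by concatenating $x$ and $y$ with a connector prompt. Independence of $x,y$ is the abstract relation under which (A2) applies; joint independence of a finite family is the abstract property used in (A3), whose stated consequence (validity of the composition, additivity of $\kappa$ and multiplicativity of $A_\theta$ over the right-associated composition) is part of the assumption. *)

From mathcomp Require Import all_boot all_order all_algebra.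
From mathcomp Require Import all_classical all_reals all_analysis.
Set Implicit Arguments. Unset Strict Implicit. Unset Printing Implicit Defensive.

Fixpoint rcompose (X : Type) (op : X -> X -> X) (x : X) (s : seq X) : X :=
  match s with
  | [::] => x
  | y :: s' => op x (rcompose op y s')
  end.

From Stdlib Require List.
From mathcomp Require Import all_boot all_order all_algebra.
From mathcomp Require Import all_classical all_reals all_analysis.
Import Order.TTheory GRing.Theory Num.Theory.
Local Open Scope ring_scope.

(* By (A1) the accuracy of a question depends only on its complexity, and by
   (A3) the accuracy at complexity m*u is the m-th power of the accuracy at u.
   Comparing x and y through questions of complexity kappa x * kappa y gives
   A x ^ kappa y = A y ^ kappa x, so ln (A x) / kappa x is a constant -lambda;
   at complexity 0 the same argument gives A x = A x ^ 2, hence A x = 1. *)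

Lemma prodr_In_const (R : pzSemiRingType) (X : Type) (F : X -> R) (c : R)
    (s : seq X) :
  (forall y, List.In y s -> F y = c) -> \prod_(y <- s) F y = c ^+ size s.
Proof.
elim: s => [|a s IHs] Fc; first by rewrite big_nil expr0.
rewrite big_cons IHs => [|y s_y]; last by apply: Fc; right.
by rewrite (Fc a (or_introl erefl)) exprS.
Qed.

Lemma exprn_eq_expR (R : realType) (a b : R) (k n : nat) :
  0 < a -> 0 < b -> (0 < k)%N -> a ^+ k = b ^+ n ->
  a = expR (ln b / k%:R * n%:R).
Proof.
move=> a_gt0 b_gt0 k_gt0 ab.
have k_neq0 : k%:R != 0 :> R by rewrite pnatr_eq0 -lt0n.
rewrite -[LHS]lnK ?posrE //; congr expR.
by rewrite mulrAC mulr_natr -lnXn // -ab lnXn // -[_ *+ k]mulr_natr mulfK.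
Qed.

Section AccuracyComplexity.

Context {R : realType} {X : Type} {kappa : X -> option nat} {A : X -> R}.

Hypothesis A_antitone : forall {x y : X} {n k : nat},
  kappa x = Some n -> kappa y = Some k -> (n <= k)%N -> A y <= A x.

Hypothesis A_exprn : forall {x : X} {u : nat} (m : nat),
  kappa x = Some u -> (0 < m)%N ->
  exists z, kappa z = Some (m * u)%N /\ A z = A x ^+ m.

Hypothesis A_le1 : forall x, A x <= 1.

Lemma A_kappa_eq {x y : X} {n : nat} :
  kappa x = Some n -> kappa y = Some n -> A x = A y.
Proof.
move=> kx ky; apply/le_anti.
by rewrite (A_antitone ky kx (leqnn n)) (A_antitone kx ky (leqnn n)).
Qed.

Lemma A_kappa0 {x : X} : kappa x = Some 0%N -> 0 < A x -> A x = 1.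
Proof.
move=> kx Ax_gt0; have [z [kz Az]] := A_exprn 2 kx isT.
rewrite muln0 in kz.
apply: (mulIf (lt0r_neq0 Ax_gt0)); rewrite mul1r -expr2 -Az.
exact: A_kappa_eq kz kx.
Qed.

Lemma A_exprn_swap {x y : X} {n k : nat} :
  kappa x = Some n -> kappa y = Some k -> 0 < A x -> 0 < A y ->
  A x ^+ k = A y ^+ n.
Proof.
move=> kx ky Ax_gt0 Ay_gt0.
case: n kx => [|n] kx; first by rewrite (A_kappa0 kx Ax_gt0) expr1n expr0.
case: k ky => [|k] ky; first by rewrite (A_kappa0 ky Ay_gt0) expr1n expr0.
have [zx [kzx Azx]] := A_exprn k.+1 kx isT.
have [zy [kzy Azy]] := A_exprn n.+1 ky isT.
by rewrite -Azx -Azy; apply: A_kappa_eq kzx _; rewrite mulnC.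
Qed.

Lemma A_expR : exists lam : R, 0 <= lam /\
  forall x n, kappa x = Some n -> 0 < A x -> A x = expR (- (lam * n%:R)).
Proof.
have [[y [k [ky k_gt0 Ay_gt0]]]|no_ref] :=
  pselect (exists y k, [/\ kappa y = Some k, (0 < k)%N & 0 < A y]).
- exists (- ln (A y) / k%:R); split.
    by rewrite divr_ge0 ?ler0n // oppr_ge0 ln_le0.
  move=> x n kx Ax_gt0; rewrite !mulNr opprK.
  exact: exprn_eq_expR (A_exprn_swap kx ky Ax_gt0 Ay_gt0).
- exists 0; split=> // x [|n] kx Ax_gt0.
    by rewrite mul0r oppr0 expR0 (A_kappa0 kx).
  by case: no_ref; exists x, n.+1.
Qed.

End AccuracyComplexity.

Theorem proposition2 (R : realType) (X : Type)
  (kappa : X -> option nat) (A : X -> R) (op : X -> X -> X)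
  (indep : X -> X -> Prop) (jindep : seq X -> Prop)
  (hA01 : forall x, 0 <= A x <= 1)
  (A1 : forall x y (n k : nat), kappa x = Some n -> kappa y = Some k ->
        (n <= k)%N -> A y <= A x)
  (A2 : forall x y (n k : nat), kappa x = Some n -> kappa y = Some k ->
        indep x y ->
        kappa (op x y) = Some (n + k)%N /\ A (op x y) = A x * A y)
  (A3 : forall (u : nat), (exists x, kappa x = Some u) ->
        forall (m : nat), (1 <= m)%N ->
        exists (x1 : X) (xs : seq X),
          size (x1 :: xs) = m /\
          (forall x, List.In x (x1 :: xs) -> kappa x = Some u) /\
          jindep (x1 :: xs) /\
          kappa (rcompose op x1 xs) = Some (m * u)%N /\
          A (rcompose op x1 xs) = \prod_(x <- x1 :: xs) A x) :
  exists lam : R, 0 <= lam /\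
    forall x (n : nat), kappa x = Some n -> 0 < A x -> A x <= 1 ->
      A x = expR (- (lam * n%:R)).
Proof.
have A_exprn x u m : kappa x = Some u -> (0 < m)%N ->
    exists z, kappa z = Some (m * u)%N /\ A z = A x ^+ m.
  move=> kx m_gt0.
  have [x1 [xs [size_m [kappa_u [_ [kz Az]]]]]] := A3 u (ex_intro _ x kx) m m_gt0.
  exists (rcompose op x1 xs); split=> //.
  rewrite Az (@prodr_In_const _ _ _ (A x)) ?size_m // => y /kappa_u ky.
  by rewrite (A_kappa_eq A1 ky kx).
have A_le1 x : A x <= 1 by case/andP: (hA01 x).
have [lam [lam_ge0 A_lam]] := A_expR A1 A_exprn A_le1.
by exists lam; split=> // x n kx Ax_gt0 _; apply: A_lam.
Qed.
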